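(* Let $\mathbf{k}$ be a commutative unital ring and $R$ a $\mathbf{k}$-algebra. Let $P_1,P_2:R\to R$ be extended Rota-Baxter operators of weights $(\lambda_1,\kappa_1)$ and $(\lambda_2,\kappa_2)$ respectively. Suppose there are $\alpha_{ij},\beta_{ij},\gamma_{ij}\in\mathbf{k}$ for $(i,j)\in\{(1,2),(2,1)\}$ such that for $1\le i\neq j\le 2$ and all $u,v\in R$, $$P_i(u)P_j(v)=P_i(uP_j(v))+P_j(P_i(u)v)+\alpha_{ij}P_i(uv)+\beta_{ij}P_j(uv)+\gamma_{ij}uv.$$ If $\beta_{12}+\alpha_{21}=\lambda_1$ and $\alpha_{12}+\beta_{21}=\lambda_2$, then for all $a,b\in\mathbf{k}$ the operator $Q:=aP_1+bP_2$ is an extended Rota-Baxter operator of weight $\big(a\lambda_1+b\lambda_2,\ a^2\kappa_1+b^2\kappa_2+ab(\gamma_{12}+\gamma_{21})\big)$.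
   Context: For $\lambda,\kappa\in\mathbf{k}$, an extended Rota-Baxter operator of weight $(\lambda,\kappa)$ on a $\mathbf{k}$-algebra $R$ is a $\mathbf{k}$-linear map $P:R\to R$ such that $P(x)P(y)=P(xP(y))+P(P(x)y)+\lambda P(xy)+\kappa xy$ for all $x,y\in R$. *)

From HB Require Import structures.
From mathcomp Require Import all_boot all_order all_algebra.
Set Implicit Arguments. Unset Strict Implicit. Unset Printing Implicit Defensive.
Import GRing.Theory.
Local Open Scope ring_scope.

Definition extended_RB (k : comNzRingType) (R : algType k)
    (lambda kappa : k) (P : R -> R) : Prop :=
  linear P /\ forall x y : R,
    P x * P y = P (x * P y) + P (P x * y) + lambda *: P (x * y) + kappa *: (x * y).

From HB Require Import structures.
From mathcomp Require Import all_boot all_order all_algebra ring.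
Import GRing.Theory.
Local Open Scope ring_scope.

(* Expand Q x * Q y bilinearly. The a^2 and b^2 terms are rewritten by the
   Rota-Baxter identities of P1 and P2, the two mixed a b terms by the
   compatibility identities; in the latter, P1 (u v) collects the coefficient
   a12 + b21 = l2 and P2 (u v) collects b12 + a21 = l1, which is exactly what
   the weight a l1 + b l2 of Q requires, while the constant terms give
   a b (c12 + c21). *)

(* The trivial extension k ⋉ V, with V squaring to zero: identities between
   k-linear combinations of vectors become commutative-ring identities in it,
   which [ring] decides. *)
Section TrivialExtension.

Variables (k : comNzRingType) (V : lmodType k).

Definition triv_ext := (k * V)%type.
HB.instance Definition _ := GRing.Zmodule.on triv_ext.

Definition triv_mul (x y : triv_ext) : triv_ext := (x.1 * y.1, x.1 *: y.2 + y.1 *: x.2).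
Definition triv_one : triv_ext := (1, 0).

Lemma triv_mulA : associative triv_mul.
Proof.
move=> [a u] [b v] [c w]; congr pair; first exact: mulrA.
by rewrite /= !scalerDr !scalerA addrA [c * a]mulrC [c * b]mulrC.
Qed.

Lemma triv_mulC : commutative triv_mul.
Proof. by move=> [a u] [b v]; congr pair; [exact: mulrC | exact: addrC]. Qed.

Lemma triv_mul1 : left_id triv_one triv_mul.
Proof. by move=> [a u]; congr pair; rewrite /= ?(mul1r, scale1r, scaler0, addr0). Qed.

Lemma triv_mulDl : left_distributive triv_mul +%R.
Proof.
move=> [a u] [b v] [c w]; congr pair; first exact: mulrDl.
by rewrite /= scalerDl scalerDr addrACA.
Qed.

Lemma triv_one_neq0 : triv_one != 0.
Proof. by apply/eqP => -[] /eqP; rewrite oner_eq0. Qed.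

HB.instance Definition _ := GRing.Zmodule_isComNzRing.Build triv_ext
  triv_mulA triv_mulC triv_mul1 triv_mulDl triv_one_neq0.

Definition triv_scal (c : k) : triv_ext := (c, 0).
Definition triv_vec (v : V) : triv_ext := (0, v).

Lemma triv_scal_is_zmod_morphism : zmod_morphism triv_scal.
Proof. by move=> a b; congr pair; rewrite /= subr0. Qed.

Lemma triv_scal_is_monoid_morphism : monoid_morphism triv_scal.
Proof. by split=> // a b; congr pair; rewrite /= !scaler0 addr0. Qed.

HB.instance Definition _ := GRing.isZmodMorphism.Build k triv_ext triv_scal
  triv_scal_is_zmod_morphism.
HB.instance Definition _ := GRing.isMonoidMorphism.Build k triv_ext triv_scal
  triv_scal_is_monoid_morphism.

Lemma triv_vec_is_zmod_morphism : zmod_morphism triv_vec.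
Proof. by move=> u v; congr pair; rewrite /= subr0. Qed.

HB.instance Definition _ := GRing.isZmodMorphism.Build V triv_ext triv_vec
  triv_vec_is_zmod_morphism.

Lemma triv_vecZ (c : k) (v : V) : triv_vec (c *: v) = triv_scal c * triv_vec v.
Proof. by congr pair; rewrite /= ?(mulr0, scale0r, addr0). Qed.

Lemma triv_vec_inj : injective triv_vec.
Proof. by move=> u v []. Qed.

End TrivialExtension.

Lemma linear_comb (k : comNzRingType) (U V : lmodType k) (f g : U -> V) (a b : k) :
  linear f -> linear g -> linear (fun x => a *: f x + b *: g x).
Proof.
move=> /GRing.semilinear_linear[fZ fD] /GRing.semilinear_linear[gZ gD] c x y.
rewrite fD gD fZ gZ; apply: (@triv_vec_inj _ V).
rewrite !raddfD /= !triv_vecZ; ring.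
Qed.

Theorem theorem2p4 (k : comNzRingType) (R : algType k)
    (P1 P2 : R -> R) (l1 k1 l2 k2 : k)
    (a12 b12 c12 a21 b21 c21 : k) :
  extended_RB l1 k1 P1 ->
  extended_RB l2 k2 P2 ->
  (forall u v : R, P1 u * P2 v = P1 (u * P2 v) + P2 (P1 u * v)
      + a12 *: P1 (u * v) + b12 *: P2 (u * v) + c12 *: (u * v)) ->
  (forall u v : R, P2 u * P1 v = P2 (u * P1 v) + P1 (P2 u * v)
      + a21 *: P2 (u * v) + b21 *: P1 (u * v) + c21 *: (u * v)) ->
  b12 + a21 = l1 ->
  a12 + b21 = l2 ->
  forall a b : k,
    extended_RB (a * l1 + b * l2)
      (a ^+ 2 * k1 + b ^+ 2 * k2 + a * b * (c12 + c21))
      (fun x => a *: P1 x + b *: P2 x).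
Proof.
move=> [L1 RB1] [L2 RB2] mix12 mix21 l1E l2E a b.
split; first exact: linear_comb.
have [P1Z P1D] := GRing.semilinear_linear L1.
have [P2Z P2D] := GRing.semilinear_linear L2.
move=> x y; rewrite !(mulrDl, mulrDr) -!(scalerAl, scalerAr) RB1 RB2 mix12 mix21.
rewrite !(P1D, P2D, P1Z, P2Z); apply: (@triv_vec_inj _ R).
rewrite !raddfD /= !triv_vecZ -l1E -l2E; ring.
Qed.
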